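(* Let $R$ be a commutative ring with $\mathbb{Q}\subseteq R$. Let $\mathcal{E}$ (resp. $\mathcal{F}$) be a finitely generated projective module over a commutative unital $R$-algebra $\mathcal{A}$ (resp. $\mathcal{B}$), with a symmetric, strongly nondegenerate, full inner product $\langle\cdot,\cdot\rangle_{\mathcal{E}}$ (resp. $\langle\cdot,\cdot\rangle_{\mathcal{F}}$). Each is equipped with a metric connection, and $\mathcal{R}^\bullet(\mathcal{E})$, $\mathcal{R}^\bullet(\mathcal{F})$ denote the corresponding Rothstein Poisson algebras. Let $g:\mathcal{A}\to\mathcal{B}$ be an algebra isomorphism. Let $G:\mathcal{E}\to\mathcal{F}$ be an $R$-linear bijection along $g$, i.e. $G(ax)=g(a)G(x)$, which is isometric: $g(\langle x,y\rangle_{\mathcal{E}})=\langle G(x),G(y)\rangle_{\mathcal{F}}$. Then $G$ lifts to a morphism of Poisson algebras $G_*:\mathcal{R}^\bullet(\mathcal{E})\to\mathcal{R}^\bullet(\mathcal{F})$ with $G_*(a)=g(a)$ for all $a\in\mathcal{A}$ and $G_*(x)=G(x)$ for all $x\in\mathcal{E}$.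
   Context: Strongly nondegenerate: the induced map from the module to its dual is an isomorphism. Full: every algebra element is a finite sum $\sum_i\langle x_i,y_i\rangle$. $\operatorname{Der}(\mathcal{A})$: $R$-linear derivations. Metric connection on $\mathcal{E}$: $\nabla:\operatorname{Der}(\mathcal{A})\times\mathcal{E}\to\mathcal{E}$ with $\nabla_{aD}x=a\nabla_Dx$, $\nabla_D(ax)=a\nabla_Dx+D(a)x$, and $D\langle x,y\rangle=\langle\nabla_Dx,y\rangle+\langle x,\nabla_Dy\rangle$. Rothstein algebra: $\mathcal{R}^r(\mathcal{E})=\bigoplus_{2p+k=r}\operatorname{Sym}^p_{\mathcal{A}}\operatorname{Der}(\mathcal{A})\otimes_{\mathcal{A}}\Lambda^k_{\mathcal{A}}\mathcal{E}$, with product $(P\otimes\xi)\wedge(Q\otimes\eta)=(P\vee Q)\otimes(\xi\wedge\eta)$. Its Poisson bracket is the unique graded Poisson bracket of degree $-2$ (graded antisymmetric, graded Leibniz with respect to $\wedge$, graded Jacobi) with: - $\{a,b\}=0=\{a,x\}$; - $\{x,y\}=\langle x,y\rangle$; - $\{D,a\}=-D(a)$; - $\{D,x\}=-\nabla_Dx$; - $\{D,E\}=-[D,E]-r(D,E)$. Here $\langle r(D,E),x\wedge y\rangle=\langle R(D,E)x,y\rangle$ with curvature $R(D,E)=\nabla_D\nabla_E-\nabla_E\nabla_D-\nabla_{[D,E]}$. The pairing on $\Lambda^2$ is $\langle a\wedge b,x\wedge y\rangle=\langle a,x\rangle\langle b,y\rangle-\langle a,y\rangle\langle b,x\rangle$.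 The same construction applies to $\mathcal{F}$ over $\mathcal{B}$. A morphism of Poisson algebras is a homogeneous degree-$0$ map compatible with the products and the brackets. *)

From mathcomp Require Import all_boot all_algebra.
Set Implicit Arguments. Unset Strict Implicit. Unset Printing Implicit Defensive.
Import GRing.Theory.
Local Open Scope ring_scope.

Section ModuleData.
Variables (R : comNzRingType) (A : comAlgType R) (E : lmodType A).

(* finitely generated projective: a direct summand of some A^n *)
Definition fg_projective : Prop :=
  exists (n : nat) (i : E -> 'rV[A]_n) (p : 'rV[A]_n -> E),
    (forall (a : A) x y, i (a *: x + y) = a *: i x + i y) /\
    (forall (a : A) u v, p (a *: u + v) = a *: p u + p v) /\
    (forall x, p (i x) = x).

Definition Alinear_form (f : E -> A) : Prop :=
  forall (a : A) x y, f (a *: x + y) = a * f x + f y.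

Definition good_inner_product (ip : E -> E -> A) : Prop :=
  (forall y, Alinear_form (fun x => ip x y)) /\
  (forall x, Alinear_form (ip x)) /\
  (forall x y, ip x y = ip y x) /\
  (* strongly nondegenerate: x |-> <x,.> : E -> Hom_A(E,A) is bijective *)
  (forall x x', (forall y, ip x y = ip x' y) -> x = x') /\
  (forall f, Alinear_form f -> exists x, forall y, f y = ip x y) /\
  (forall a : A, exists s : seq (E * E), a = \sum_(q <- s) ip q.1 q.2).

Definition isDer (D : A -> A) : Prop :=
  (forall (r : R) (a b : A), D (r *: a + b) = r *: D a + D b) /\
  (forall a b : A, D (a * b) = D a * b + a * D b).

Definition der_add (D D' : A -> A) : A -> A := fun b => D b + D' b.
Definition der_scale (a : A) (D : A -> A) : A -> A := fun b => a * D b.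
Definition der_lie (D D' : A -> A) : A -> A := fun b => D (D' b) - D' (D b).

Definition metric_connection (ip : E -> E -> A) (nabla : (A -> A) -> E -> E)
  : Prop :=
  (forall D D' x, isDer D -> isDer D' ->
      nabla (der_add D D') x = nabla D x + nabla D' x) /\
  (forall a D x, isDer D -> nabla (der_scale a D) x = a *: nabla D x) /\
  (forall D x y, isDer D -> nabla D (x + y) = nabla D x + nabla D y) /\
  (forall D (a : A) x, isDer D -> nabla D (a *: x) = a *: nabla D x + D a *: x) /\
  (forall D x y, isDer D -> D (ip x y) = ip (nabla D x) y + ip x (nabla D y)).

Definition curvature (nabla : (A -> A) -> E -> E) (D D' : A -> A) (x : E) : E :=
  nabla D (nabla D' x) - nabla D' (nabla D x) - nabla (der_lie D D') x.

(* A graded ring is a ring T together with the predicates hom r       *)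
(* ("homogeneous of degree r").                                       *)

Definition graded_commutative (T : nzRingType) (hom : nat -> T -> Prop) : Prop :=
  (forall r, hom r 0) /\
  (forall r x y, hom r x -> hom r y -> hom r (x - y)) /\
  hom 0%N 1 /\
  (forall r s x y, hom r x -> hom s y -> hom (r + s)%N (x * y)) /\
  (forall r s x y, hom r x -> hom s y -> x * y = (-1) ^+ (r * s) * (y * x)).

Definition direct_sum (T : nzRingType) (hom : nat -> T -> Prop) : Prop :=
  (forall t : T, exists (n : nat) (f : nat -> T),
      (forall i, hom i (f i)) /\ t = \sum_(i < n) f i) /\
  (forall (n : nat) (f : nat -> T), (forall i, hom i (f i)) ->
      \sum_(i < n) f i = 0 -> forall i, (i < n)%N -> f i = 0).

(* maps A -> T^0, E -> T^1, Der(A) -> T^2, compatible with the A-module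
   structures (T is an A-algebra through iA) *)
Definition generator_maps (T : nzRingType) (hom : nat -> T -> Prop)
    (iA : A -> T) (iE : E -> T) (iD : (A -> A) -> T) : Prop :=
  (forall a b, iA (a + b) = iA a + iA b) /\
  (forall a b, iA (a * b) = iA a * iA b) /\
  iA 1 = 1 /\
  (forall a, hom 0%N (iA a)) /\
  (forall x y, iE (x + y) = iE x + iE y) /\
  (forall (a : A) x, iE (a *: x) = iA a * iE x) /\
  (forall x, hom 1%N (iE x)) /\
  (forall D D', isDer D -> isDer D' -> iD (der_add D D') = iD D + iD D') /\
  (forall a D, isDer D -> iD (der_scale a D) = iA a * iD D) /\
  (forall D, isDer D -> hom 2%N (iD D)).

Definition ring_morph (T T' : nzRingType) (phi : T -> T') : Prop :=
  (forall x y, phi (x + y) = phi x + phi y) /\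
  (forall x y, phi (x * y) = phi x * phi y) /\ phi 1 = 1.

(* Universal property: (T, iA, iE, iD) is the free graded-commutative
   A-algebra on E (degree 1) and Der(A) (degree 2), i.e.
   T = Sym_A Der(A) (x)_A Lambda_A E. *)
Definition free_graded_commutative (T : nzRingType)
    (iA : A -> T) (iE : E -> T) (iD : (A -> A) -> T) : Prop :=
  forall (T' : nzRingType) (hom' : nat -> T' -> Prop)
         (iA' : A -> T') (iE' : E -> T') (iD' : (A -> A) -> T'),
    graded_commutative hom' -> generator_maps hom' iA' iE' iD' ->
    exists phi : T -> T',
      ring_morph phi /\
      (forall a, phi (iA a) = iA' a) /\ (forall x, phi (iE x) = iE' x) /\
      (forall D, isDer D -> phi (iD D) = iD' D) /\
      (forall psi : T -> T', ring_morph psi ->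
         (forall a, psi (iA a) = iA' a) -> (forall x, psi (iE x) = iE' x) ->
         (forall D, isDer D -> psi (iD D) = iD' D) ->
         forall t, psi t = phi t).

Definition graded_poisson_bracket (T : nzRingType) (hom : nat -> T -> Prop)
    (br : T -> T -> T) : Prop :=
  (forall x y z, br (x + y) z = br x z + br y z) /\
  (forall x y z, br x (y + z) = br x y + br x z) /\
  (forall r s x y, hom r x -> hom s y ->
      hom (r + s - 2)%N (br x y) /\ ((r + s < 2)%N -> br x y = 0)) /\
  (forall r s x y, hom r x -> hom s y ->
      br x y = - ((-1) ^+ (r * s) * br y x)) /\
  (forall r s x y z, hom r x -> hom s y ->
      br x (y * z) = br x y * z + (-1) ^+ (r * s) * (y * br x z)) /\
  (forall r s x y z, hom r x -> hom s y ->
      br x (br y z) = br (br x y) z + (-1) ^+ (r * s) * br y (br x z)).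

(* the defining values of the Rothstein bracket on generators;
   r(D,D') = sum a_i /\ b_i in Lambda^2 E (realised as sum iE a_i * iE b_i)
   with <r(D,D'), x /\ y> = <R(D,D') x, y>. *)
Definition rothstein_values (T : nzRingType) (ip : E -> E -> A)
    (nabla : (A -> A) -> E -> E)
    (iA : A -> T) (iE : E -> T) (iD : (A -> A) -> T) (br : T -> T -> T) : Prop :=
  (forall a b, br (iA a) (iA b) = 0) /\
  (forall a x, br (iA a) (iE x) = 0) /\
  (forall x y, br (iE x) (iE y) = iA (ip x y)) /\
  (forall D a, isDer D -> br (iD D) (iA a) = - iA (D a)) /\
  (forall D x, isDer D -> br (iD D) (iE x) = - iE (nabla D x)) /\
  (forall D D', isDer D -> isDer D' ->
     exists s : seq (E * E),
       (forall x y, \sum_(q <- s) (ip q.1 x * ip q.2 y - ip q.1 y * ip q.2 x)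
                    = ip (curvature nabla D D' x) y) /\
       br (iD D) (iD D') = - iD (der_lie D D') - \sum_(q <- s) iE q.1 * iE q.2).

Definition is_rothstein_algebra (ip : E -> E -> A) (nabla : (A -> A) -> E -> E)
    (T : nzRingType) (hom : nat -> T -> Prop)
    (iA : A -> T) (iE : E -> T) (iD : (A -> A) -> T) (br : T -> T -> T) : Prop :=
  graded_commutative hom /\ direct_sum hom /\
  generator_maps hom iA iE iD /\ free_graded_commutative iA iE iD /\
  graded_poisson_bracket hom br /\ rothstein_values ip nabla iA iE iD br.

End ModuleData.

Definition poisson_morphism (T T' : nzRingType)
    (hom : nat -> T -> Prop) (hom' : nat -> T' -> Prop)
    (br : T -> T -> T) (br' : T' -> T' -> T') (phi : T -> T') : Prop :=
  ring_morph phi /\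
  (forall r x, hom r x -> hom' r (phi x)) /\
  (forall x y, phi (br x y) = br' (phi x) (phi y)).

(* The Rothstein algebra is free on [A], [E] (degree 1) and [Der(A)] (degree 2),
   so [G_*] is determined by [a |-> g a], [x |-> G x] and [D |-> g_* D + w_D],
   where [g_* D = g o D o g^-1] and [w_D] is the element of [Lambda^2 F] whose
   bracket with [F] is the [B]-linear skew-adjoint operator
   [nabla^F_(g_* D) - G o nabla^E_D o G^-1]; it exists because [F] has a dual
   frame and 2 is invertible. Every element is a sum of homogeneous products of
   generators, so degrees are preserved, and by the Leibniz rule it suffices to
   compare brackets of generators. The only nontrivial case is two derivations:
   there the difference of the two sides lies in [Lambda^2 F] and, by the
   Jacobi identity, brackets to zero with every element of [F], so it vanishes. *)

From HB Require Import structures.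
From mathcomp Require Import all_boot all_algebra.
From mathcomp Require Import boolp ring.
Set Implicit Arguments. Unset Strict Implicit. Unset Printing Implicit Defensive.
Import GRing.Theory.
Local Open Scope ring_scope.

Section AdditiveMaps.
Variables (U V : zmodType) (f : U -> V).
Hypothesis fD : {morph f : x y / x + y}.

Lemma add_morph0 : f 0 = 0.
Proof. by apply: (@addrI _ (f 0)); rewrite -fD !addr0. Qed.

Lemma add_morphN x : f (- x) = - f x.
Proof. by apply/eqP; rewrite -addr_eq0 -fD addNr add_morph0. Qed.

Lemma add_morphB x y : f (x - y) = f x - f y.
Proof. by rewrite fD add_morphN. Qed.

Lemma add_morph_sum I (s : seq I) (F : I -> U) :
  f (\sum_(i <- s) F i) = \sum_(i <- s) f (F i).
Proof. exact: (big_morph f fD add_morph0). Qed.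

End AdditiveMaps.

Lemma ring_morph_sign (T T' : nzRingType) (phi : T -> T') :
  ring_morph phi -> forall n x, phi ((-1) ^+ n * x) = (-1) ^+ n * phi x.
Proof.
case=> phiD [phiM phi1] n x; rewrite phiM; congr (_ * _).
by elim: n => [|n IH]; rewrite ?expr0 // !exprS phiM IH (add_morphN phiD) phi1.
Qed.

Section Derivation.
Variables (R : comNzRingType) (A : comAlgType R) (D : A -> A).
Hypothesis HD : isDer D.

Lemma derD : {morph D : a b / a + b}.
Proof. by case: HD => lin _ a b; rewrite -[a]scale1r lin !scale1r. Qed.

Lemma derZ (r : R) a : D (r *: a) = r *: D a.
Proof. by case: HD => lin _; rewrite -[r *: a]addr0 lin (add_morph0 derD) addr0. Qed.

Lemma derM a b : D (a * b) = D a * b + a * D b.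
Proof. by case: HD. Qed.

End Derivation.

Section DerivationOps.
Variables (R : comNzRingType) (A : comAlgType R) (D D' : A -> A).
Hypotheses (HD : isDer D) (HD' : isDer D').

Lemma der_addP : isDer (der_add D D').
Proof.
split=> [r a b|a b]; rewrite /der_add.
  by rewrite (derD HD) (derD HD') (derZ HD) (derZ HD') scalerDr addrACA.
by rewrite (derM HD) (derM HD') mulrDl mulrDr addrACA.
Qed.

Lemma der_scaleP a : isDer (der_scale a D).
Proof.
split=> [r b c|b c]; rewrite /der_scale.
  by rewrite (derD HD) (derZ HD) mulrDr scalerAr.
by rewrite (derM HD) mulrDr mulrA mulrCA.
Qed.

Lemma der_lieP : isDer (der_lie D D').
Proof.
split=> [r a b|a b]; rewrite /der_lie.
  case: HD HD' => [lin _] [lin' _].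
  by rewrite lin' lin lin lin' scalerBr addrACA opprD.
rewrite (derM HD') (derD HD) !(derM HD) (derD HD') !(derM HD'); ring.
Qed.

End DerivationOps.

Section GradedRing.
Variables (T : nzRingType) (hom : nat -> T -> Prop).
Hypothesis Hgc : graded_commutative hom.

Lemma hom0 r : hom r 0. Proof. by case: Hgc. Qed.

Lemma homB r x y : hom r x -> hom r y -> hom r (x - y).
Proof. by case: Hgc => _ [hB _]; apply: hB. Qed.

Lemma homN r x : hom r x -> hom r (- x).
Proof. by rewrite -sub0r; apply: homB; apply: hom0. Qed.

Lemma homD r x y : hom r x -> hom r y -> hom r (x + y).
Proof. by move=> hx /homN hy; rewrite -[y]opprK; apply: homB. Qed.

Lemma hom1 : hom 0 1. Proof. by case: Hgc => _ [_ []]. Qed.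

Lemma homM r s x y : hom r x -> hom s y -> hom (r + s) (x * y).
Proof. by case: Hgc => _ [_ [_ [hM _]]]; apply: hM. Qed.

Lemma homC r s x y : hom r x -> hom s y -> x * y = (-1) ^+ (r * s) * (y * x).
Proof. by case: Hgc => _ [_ [_ [_ hC]]]; apply: hC. Qed.

Lemma hom_sum r (I : eqType) (s : seq I) (P : pred I) (f : I -> T) :
  (forall i, i \in s -> P i -> hom r (f i)) -> hom r (\sum_(i <- s | P i) f i).
Proof.
move=> hf; rewrite big_seq_cond; apply: (big_ind (hom r)) => [|x y|i /andP[]].
- exact: hom0.
- exact: homD.
- exact: hf.
Qed.

Lemma hom0_comm s x y : hom 0 x -> hom s y -> x * y = y * x.
Proof. by move=> hx hy; rewrite (homC hx hy) mul0n expr0 mul1r. Qed.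

Lemma sign_even n : (-1) ^+ (2 * n) = 1 :> T.
Proof. by rewrite exprM sqrrN !expr1n. Qed.

End GradedRing.

Section GeneratorMaps.
Variables (R : comNzRingType) (A : comAlgType R) (E : lmodType A).
Variables (T : nzRingType) (hom : nat -> T -> Prop).
Variables (iA : A -> T) (iE : E -> T) (iD : (A -> A) -> T).
Hypothesis Hgm : generator_maps hom iA iE iD.

Lemma iAD : {morph iA : a b / a + b}.
Proof. by case: Hgm => [H _]; apply: H. Qed.
Lemma iAM : {morph iA : a b / a * b}.
Proof. by case: Hgm => _ [H _]; apply: H. Qed.
Lemma iA1 : iA 1 = 1.
Proof. by case: Hgm => _ [_ [H _]]. Qed.
Lemma hom_iA a : hom 0 (iA a).
Proof. by case: Hgm => _ [_ [_ [H _]]]. Qed.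
Lemma iED : {morph iE : x y / x + y}.
Proof. by case: Hgm => _ [_ [_ [_ [H _]]]]; apply: H. Qed.
Lemma iEZ a x : iE (a *: x) = iA a * iE x.
Proof. by case: Hgm => _ [_ [_ [_ [_ [H _]]]]]. Qed.
Lemma hom_iE x : hom 1 (iE x).
Proof. by case: Hgm => _ [_ [_ [_ [_ [_ [H _]]]]]]. Qed.
Lemma iDD D D' : isDer D -> isDer D' -> iD (der_add D D') = iD D + iD D'.
Proof. by case: Hgm => _ [_ [_ [_ [_ [_ [_ [H _]]]]]]]; apply: H. Qed.
Lemma iDZ a D : isDer D -> iD (der_scale a D) = iA a * iD D.
Proof. by case: Hgm => _ [_ [_ [_ [_ [_ [_ [_ [H _]]]]]]]]; apply: H. Qed.
Lemma hom_iD D : isDer D -> hom 2 (iD D).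
Proof. by case: Hgm => _ [_ [_ [_ [_ [_ [_ [_ [_ H]]]]]]]]; apply: H. Qed.

End GeneratorMaps.

Record subring_of (T : nzRingType) (S : {pred T}) (HS : subring_closed S) :=
  SubringOf { subring_val : T; subring_valP : subring_val \in S }.

Section SubringOf.
Variables (T : nzRingType) (S : {pred T}) (HS : subring_closed S).
HB.instance Definition _ := GRing.isSubringClosed.Build T S HS.
HB.instance Definition _ := [isSub for @subring_val T S HS].
HB.instance Definition _ := [Choice of subring_of HS by <:].
HB.instance Definition _ := [SubChoice_isSubNzRing of subring_of HS by <:].
End SubringOf.

Section FreeGradedSpan.
Variables (R : comNzRingType) (A : comAlgType R) (E : lmodType A).
Variables (T : nzRingType) (hom : nat -> T -> Prop).
Variables (iA : A -> T) (iE : E -> T) (iD : (A -> A) -> T).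
Hypotheses (Hgc : graded_commutative hom) (Hgm : generator_maps hom iA iE iD).
Hypothesis Hfree : free_graded_commutative iA iE iD.
Variable good : nat -> T -> Prop.
Hypotheses (good1 : good 0 1) (goodN : forall r t, good r t -> good r (- t)).
Hypothesis goodM : forall r s t u, good r t -> good s u -> good (r + s)%N (t * u).
Hypotheses (good_iA : forall a, good 0 (iA a)) (good_iE : forall x, good 1 (iE x)).
Hypothesis good_iD : forall D, isDer D -> good 2 (iD D).

Definition good_span (t : T) : bool :=
  `[< exists s : seq (nat * T), (forall p, p \in s -> good p.1 p.2) /\
                                t = \sum_(p <- s) p.2 >].

Lemma good_span1 r t : good r t -> t \in good_span.
Proof.
move=> ht; apply/asboolP; exists [:: (r, t)]; rewrite big_seq1.
by split=> // p; rewrite inE => /eqP ->.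
Qed.

Lemma good_span_subring : subring_closed good_span.
Proof.
split; first exact: (good_span1 good1).
- move=> u v /asboolP [s1 [H1 ->]] /asboolP [s2 [H2 ->]]; apply/asboolP.
  exists (s1 ++ [seq (p.1, - p.2) | p <- s2]); split.
    move=> p; rewrite mem_cat => /orP [/H1 //|/mapP [q /H2 Hq ->]]; exact: goodN.
  by rewrite big_cat big_map sumrN.
- move=> u v /asboolP [s1 [H1 ->]] /asboolP [s2 [H2 ->]]; apply/asboolP.
  exists [seq ((p.1 + q.1)%N, p.2 * q.2) | p <- s1, q <- s2]; split.
    move=> p /allpairsP [[q1 q2] [/= Hq1 Hq2 ->]]; exact: goodM (H1 _ Hq1) (H2 _ Hq2).
  rewrite big_allpairs_dep big_distrl; apply: eq_bigr => p _.
  by rewrite big_distrr.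
Qed.

Local Notation ST := (subring_of good_span_subring).

Definition span_hom (r : nat) (u : ST) := hom r (val u).

Definition span_iA a : ST := SubringOf good_span_subring (good_span1 (good_iA a)).
Definition span_iE x : ST := SubringOf good_span_subring (good_span1 (good_iE x)).
Definition span_iD (D : A -> A) : ST :=
  if pselect (isDer D) is left HD
  then SubringOf good_span_subring (good_span1 (good_iD HD)) else 0.

Lemma span_iDE D : isDer D -> val (span_iD D) = iD D.
Proof. by rewrite /span_iD; case: pselect. Qed.

Lemma span_graded_commutative : graded_commutative span_hom.
Proof.
rewrite /span_hom; do ![split] => [r|r x y||r s x y|r s x y hx hy].
- exact: hom0.
- by rewrite rmorphB; apply: homB.
- by rewrite rmorph1; apply: hom1.
- by rewrite rmorphM; apply: homM.
- by apply: val_inj; rewrite !rmorphM rmorphXn rmorphN rmorph1 (homC Hgc hx hy).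
Qed.

Lemma span_generator_maps : generator_maps span_hom span_iA span_iE span_iD.
Proof.
rewrite /span_hom; do ![split].
- by move=> a b; apply: val_inj; apply: (iAD Hgm).
- by move=> a b; apply: val_inj; apply: (iAM Hgm).
- by apply: val_inj; apply: (iA1 Hgm).
- exact: (hom_iA Hgm).
- by move=> x y; apply: val_inj; apply: (iED Hgm).
- by move=> a x; apply: val_inj; apply: (iEZ Hgm).
- exact: (hom_iE Hgm).
- move=> D D' HD HD'; apply: val_inj.
  by rewrite rmorphD /= !span_iDE ?(iDD Hgm) //; apply: der_addP.
- move=> a D HD; apply: val_inj.
  by rewrite rmorphM /= !span_iDE ?(iDZ Hgm) //; apply: der_scaleP.
- by move=> D HD; rewrite span_iDE //; apply: (hom_iD Hgm).
Qed.

(* The span is a graded-commutative algebra receiving the generators, so the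
   universal property gives a retraction of the inclusion. *)
Lemma free_graded_span t :
  exists s : seq (nat * T), (forall p, p \in s -> good p.1 p.2) /\ t = \sum_(p <- s) p.2.
Proof.
have [phi [phiR [phiA [phiE [phiD _]]]]] :=
  Hfree span_graded_commutative span_generator_maps.
have [phi0 [_ [_ [_ [_ uniq]]]]] := Hfree Hgc Hgm.
have -> : t = val (phi t).
  transitivity (phi0 t); first exact: (uniq id).
  have [vD [vM v1]] := phiR.
  symmetry; apply: (uniq (fun t => val (phi t))).
  - by do ![split]=> [x y|x y|]; rewrite ?vD ?vM ?v1 ?rmorphD ?rmorphM.
  - by move=> a; rewrite phiA.
  - by move=> x; rewrite phiE.
  - by move=> D HD; rewrite phiD // span_iDE.
by have /asboolP := valP (phi t).
Qed.

End FreeGradedSpan.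

Section HomogeneousComponent.
Variables (T : nzRingType) (hom : nat -> T -> Prop).
Hypotheses (Hgc : graded_commutative hom) (Hds : direct_sum hom).

Lemma homogeneous_component r y (s : seq (nat * T)) :
  hom r y -> (forall p, p \in s -> hom p.1 p.2) -> y = \sum_(p <- s) p.2 ->
  y = \sum_(p <- s | p.1 == r) p.2.
Proof.
move=> hy hs ey; set N := (maxn r (\max_(q <- s) q.1)).+1.
have ltN p : p \in s -> (p.1 < N)%N.
  move=> ps; rewrite ltnS (leq_trans _ (leq_maxr _ _)) //.
  exact: (@leq_bigmax_seq _ s xpredT (fun q : nat * T => q.1) p ps isT).
have rN : (r < N)%N by rewrite ltnS leq_maxl.
pose f i := \sum_(p <- s | p.1 == i) p.2 - (if i == r then y else 0).
have hf i : hom i (f i).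
  apply: homB => //; first by apply: hom_sum => // p ps /eqP <-; apply: hs.
  by case: eqP => [->|_] //; apply: hom0.
have sum_by_degree :
    \sum_(i < N) \sum_(p <- s | p.1 == i) p.2 = \sum_(p <- s) p.2.
  under eq_bigr => i _ do rewrite big_mkcond.
  rewrite exchange_big /= big_seq [RHS]big_seq; apply: eq_bigr => p ps.
  rewrite -(big_mkcond (fun i : 'I_N => p.1 == i)).
  under eq_bigl => i do rewrite eq_sym.
  by rewrite (big_ord1_eq _ (fun _ => p.2)) ltN.
have sum_f : \sum_(i < N) f i = 0.
  by rewrite sumrB sum_by_degree -big_mkcond big_ord1_eq rN -ey subrr.
have [_ /(_ N f hf sum_f r rN)] := Hds.
by rewrite /f eqxx => /eqP; rewrite subr_eq0 => /eqP.
Qed.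

End HomogeneousComponent.

Section PoissonBracket.
Variables (T : nzRingType) (hom : nat -> T -> Prop) (br : T -> T -> T).
Hypotheses (Hgc : graded_commutative hom) (Hbr : graded_poisson_bracket hom br).

Lemma brDl y : {morph br^~ y : x x' / x + x'}.
Proof. by case: Hbr => H _ x x'; apply: H. Qed.

Lemma brDr x : {morph br x : y y' / y + y'}.
Proof. by case: Hbr => _ [H _] y y'; apply: H. Qed.

Lemma hom_br r s x y : hom r x -> hom s y -> hom (r + s - 2) (br x y).
Proof. by case: Hbr => _ [_ [H _]] hx hy; case: (H _ _ _ _ hx hy). Qed.

Lemma brC r s x y : hom r x -> hom s y -> br x y = - ((-1) ^+ (r * s) * br y x).
Proof. by case: Hbr => _ [_ [_ [H _]]]; apply: H. Qed.

Lemma brL r s x y z : hom r x -> hom s y ->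
  br x (y * z) = br x y * z + (-1) ^+ (r * s) * (y * br x z).
Proof. by case: Hbr => _ [_ [_ [_ [H _]]]]; apply: H. Qed.

Lemma brJ r s x y z : hom r x -> hom s y ->
  br x (br y z) = br (br x y) z + (-1) ^+ (r * s) * br y (br x z).
Proof. by case: Hbr => _ [_ [_ [_ [_ H]]]]; apply: H. Qed.

Lemma brx1 r x : hom r x -> br x 1 = 0.
Proof.
move=> hx; have := brL 1 hx (hom1 Hgc).
rewrite !mulr1 muln0 expr0 !mul1r => h.
by apply: (@addrI _ (br x 1)); rewrite addr0 -h.
Qed.

Lemma brJ_even x y z : hom 2 x -> hom 2 y ->
  br (br x y) z = br x (br y z) - br y (br x z).
Proof. by move=> hx hy; rewrite (brJ z hx hy) (sign_even _ 2) mul1r addrK. Qed.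

End PoissonBracket.

Section InnerProduct.
Variables (R : comNzRingType) (A : comAlgType R) (E : lmodType A).
Variable ip : E -> E -> A.
Hypothesis Hip : good_inner_product ip.

Lemma ipC x y : ip x y = ip y x.
Proof. by case: Hip => _ [_ [H _]]. Qed.

Lemma ipDZl a x x' y : ip (a *: x + x') y = a * ip x y + ip x' y.
Proof. by case: Hip => H _; apply: (H y). Qed.

Lemma ipDl y : {morph ip^~ y : x x' / x + x'}.
Proof. by move=> x x' /=; rewrite -[x]scale1r ipDZl mul1r scale1r. Qed.

Lemma ipDr x : {morph ip x : y y' / y + y'}.
Proof. by move=> y y'; rewrite !(ipC x) ipDl. Qed.

Lemma ipZl a x y : ip (a *: x) y = a * ip x y.
Proof. by rewrite -[a *: x]addr0 ipDZl (add_morph0 (ipDl y)) addr0. Qed.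

Lemma ipZr a x y : ip x (a *: y) = a * ip x y.
Proof. by rewrite ipC ipZl ipC. Qed.

Lemma ip_inj x x' : (forall y, ip x y = ip x' y) -> x = x'.
Proof. by case: Hip => _ [_ [_ [H _]]]; apply: H. Qed.

Hypothesis Hfg : fg_projective E.

(* [y = p (i y) = sum_k (i y)_k p(e_k)], and each coordinate [(i y)_k] is a
   linear form in [y], hence of the form [ip f_k y]. *)
Lemma dual_frame : exists fr : seq (E * E),
  (forall y, y = \sum_(k <- fr) ip k.2 y *: k.1) /\
  (forall w, w = \sum_(k <- fr) ip k.1 w *: k.2).
Proof.
have [n [i [p [iL [pL pK]]]]] := Hfg.
have pD : {morph p : u v / u + v}.
  by move=> u v; rewrite -{1}[u]scale1r pL scale1r.
have pZ (a : A) u : p (a *: u) = a *: p u.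
  by rewrite -[a *: u]addr0 pL (add_morph0 pD) addr0.
have coord_ip k : {f : E | forall y, i y 0 k = ip f y}.
  apply: cid; case: Hip => _ [_ [_ [_ [H _]]]]; apply: H => a x y.
  by rewrite iL !mxE.
pose fr := [seq (p (delta_mx 0 k), sval (coord_ip k)) | k <- enum 'I_n].
have frame y : y = \sum_(k <- fr) ip k.2 y *: k.1.
  rewrite big_map -{1}(pK y) {1}(row_sum_delta (i y)) (add_morph_sum pD).
  rewrite big_enum /=; apply: eq_bigr => k _.
  by rewrite pZ (svalP (coord_ip k)).
exists fr; split=> // w; apply: ip_inj => z.
rewrite (add_morph_sum (ipDl z)) {1}(frame z) (add_morph_sum (ipDr w)).
by apply: eq_bigr => k _; rewrite ipZr ipZl mulrC ipC.
Qed.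

End InnerProduct.

Section RothsteinAlgebra.
Variables (R : comNzRingType) (A : comAlgType R) (E : lmodType A).
Variables (ip : E -> E -> A) (nabla : (A -> A) -> E -> E).
Variables (T : nzRingType) (hom : nat -> T -> Prop).
Variables (iA : A -> T) (iE : E -> T) (iD : (A -> A) -> T) (br : T -> T -> T).
Hypothesis HR : is_rothstein_algebra ip nabla hom iA iE iD br.

Lemma rothstein_graded : graded_commutative hom.
Proof. by case: HR. Qed.
Lemma rothstein_direct_sum : direct_sum hom.
Proof. by case: HR => _ []. Qed.
Lemma rothstein_generators : generator_maps hom iA iE iD.
Proof. by case: HR => _ [_ []]. Qed.
Lemma rothstein_free : free_graded_commutative iA iE iD.
Proof. by case: HR => _ [_ [_ []]]. Qed.
Lemma rothstein_bracket : graded_poisson_bracket hom br.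
Proof. by case: HR => _ [_ [_ [_ []]]]. Qed.

Lemma rothstein_generator_brackets : rothstein_values ip nabla iA iE iD br.
Proof. by case: HR => _ [_ [_ [_ []]]]. Qed.

Lemma br_iAA a b : br (iA a) (iA b) = 0.
Proof. by case: rothstein_generator_brackets. Qed.
Lemma br_iAE a x : br (iA a) (iE x) = 0.
Proof. by case: rothstein_generator_brackets => _ []. Qed.
Lemma br_iEE x y : br (iE x) (iE y) = iA (ip x y).
Proof. by case: rothstein_generator_brackets => _ [_ []]. Qed.
Lemma br_iDA D a : isDer D -> br (iD D) (iA a) = - iA (D a).
Proof. by case: rothstein_generator_brackets => _ [_ [_ [H _]]]; apply: H. Qed.
Lemma br_iDE D x : isDer D -> br (iD D) (iE x) = - iE (nabla D x).
Proof. by case: rothstein_generator_brackets => _ [_ [_ [_ [H _]]]]; apply: H. Qed.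
(* Only the membership of [r(D, D')] in [Lambda^2 E] is used, not its value. *)
Lemma br_iDD D D' : isDer D -> isDer D' ->
  exists s : seq (E * E),
    br (iD D) (iD D') = - iD (der_lie D D') - \sum_(q <- s) iE q.1 * iE q.2.
Proof.
case: rothstein_generator_brackets => _ [_ [_ [_ [_ H]]]] HD HD'.
by have [s [_ ->]] := H _ _ HD HD'; exists s.
Qed.

End RothsteinAlgebra.

Section Wedge2.
Variables (R : comNzRingType) (A : comAlgType R) (E : lmodType A).
Variables (ip : E -> E -> A) (nabla : (A -> A) -> E -> E).
Variables (T : nzRingType) (hom : nat -> T -> Prop).
Variables (iA : A -> T) (iE : E -> T) (iD : (A -> A) -> T) (br : T -> T -> T).
Hypothesis HR : is_rothstein_algebra ip nabla hom iA iE iD br.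
Hypothesis Hip : good_inner_product ip.

Let Hgc := rothstein_graded HR.
Let Hgm := rothstein_generators HR.
Let Hbr := rothstein_bracket HR.

Definition wedge2 (s : seq (E * E)) : T := \sum_(q <- s) iE q.1 * iE q.2.
Definition is_wedge2 (W : T) := exists s, W = wedge2 s.

Definition contraction (s : seq (E * E)) (y : E) : E :=
  \sum_(q <- s) (ip q.2 y *: q.1 - ip q.1 y *: q.2).

Lemma hom_iEE x y : hom 2 (iE x * iE y).
Proof. exact: (homM Hgc (hom_iE Hgm x) (hom_iE Hgm y)). Qed.

Lemma iEE_anticomm x y : iE x * iE y = - (iE y * iE x).
Proof. by rewrite (homC Hgc (hom_iE Hgm x) (hom_iE Hgm y)) expr1 mulN1r. Qed.

Lemma iA_comm a r y : hom r y -> iA a * y = y * iA a.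
Proof. exact: (hom0_comm Hgc (hom_iA Hgm a)). Qed.

Lemma hom_wedge2 s : hom 2 (wedge2 s).
Proof. by apply: (hom_sum Hgc) => q _ _; apply: hom_iEE. Qed.

Lemma br_wedge2_iE s y : br (wedge2 s) (iE y) = iE (contraction s y).
Proof.
rewrite (add_morph_sum (brDl Hbr _)) (add_morph_sum (iED Hgm)).
apply: eq_bigr => q _; have [hx hy] := (hom_iE Hgm q.1, hom_iE Hgm y).
rewrite (brC Hbr (hom_iEE _ _) (hom_iE Hgm y)) (sign_even _ 1) mul1r.
rewrite (brL Hbr _ (hom_iE Hgm y) hx) expr1 !(br_iEE HR) mulN1r opprD opprK.
by rewrite (add_morphB (iED Hgm)) !(iEZ Hgm) (iA_comm _ hx) addrC !(ipC Hip y).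
Qed.

Lemma br_wedge2_iA s a : br (wedge2 s) (iA a) = 0.
Proof.
rewrite (brC Hbr (hom_wedge2 s) (hom_iA Hgm a)) muln0 expr0 mul1r.
rewrite (add_morph_sum (brDr Hbr _)) big1 ?oppr0 // => q _.
by rewrite (brL Hbr _ (hom_iA Hgm a) (hom_iE Hgm _)) !(br_iAE HR) mul0r !mulr0 addr0.
Qed.

Lemma is_wedge2D W W' : is_wedge2 W -> is_wedge2 W' -> is_wedge2 (W + W').
Proof. by move=> [s ->] [s' ->]; exists (s ++ s'); rewrite /wedge2 big_cat. Qed.

Lemma is_wedge2N W : is_wedge2 W -> is_wedge2 (- W).
Proof.
move=> [s ->]; exists [seq (- q.1, q.2) | q <- s].
by rewrite /wedge2 big_map -sumrN; apply: eq_bigr => q _; rewrite (add_morphN (iED Hgm)) mulNr.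
Qed.

Lemma is_wedge2_iEE x y : is_wedge2 (iE x * iE y).
Proof. by exists [:: (x, y)]; rewrite /wedge2 big_seq1. Qed.

Lemma is_wedge2_sum I (r : seq I) (f : I -> T) :
  (forall i, is_wedge2 (f i)) -> is_wedge2 (\sum_(i <- r) f i).
Proof.
move=> H; apply: big_ind => //; last exact: is_wedge2D.
by exists [::]; rewrite /wedge2 big_nil.
Qed.

Lemma is_wedge2_br_iD D W : isDer D -> is_wedge2 W -> is_wedge2 (br (iD D) W).
Proof.
move=> HD [s ->]; rewrite (add_morph_sum (brDr Hbr _)); apply: is_wedge2_sum => q.
rewrite (brL Hbr _ (hom_iD Hgm HD) (hom_iE Hgm _)) (sign_even _ 1) mul1r.
by rewrite !(br_iDE HR) // -!(add_morphN (iED Hgm)); apply: is_wedge2D; apply: is_wedge2_iEE.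
Qed.

Lemma is_wedge2_br_wedge2 W W' : is_wedge2 W -> is_wedge2 W' -> is_wedge2 (br W W').
Proof.
move=> [s ->] [s' ->]; rewrite (add_morph_sum (brDr Hbr _)); apply: is_wedge2_sum => q.
rewrite (brL Hbr _ (hom_wedge2 s) (hom_iE Hgm _)) (sign_even _ 1) mul1r.
by rewrite !br_wedge2_iE; apply: is_wedge2D; apply: is_wedge2_iEE.
Qed.

Lemma br_iD_wedge2 D D' W W' : isDer D -> isDer D' -> is_wedge2 W -> is_wedge2 W' ->
  exists V, is_wedge2 V /\ br (iD D + W) (iD D' + W') = - iD (der_lie D D') + V.
Proof.
move=> HD HD' hW hW'; have [s eDD'] := br_iDD HR HD HD'.
exists (- wedge2 s + br (iD D) W' + br W (iD D') + br W W'); split.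
  have [s' eW] := hW.
  apply: is_wedge2D; last exact: is_wedge2_br_wedge2.
  apply: is_wedge2D.
    by apply: is_wedge2D; [apply: is_wedge2N; exists s | exact: is_wedge2_br_iD].
  rewrite eW (brC Hbr (hom_wedge2 s') (hom_iD Hgm HD')) (sign_even _ 2) mul1r.
  by apply: is_wedge2N; apply: is_wedge2_br_iD => //; exists s'.
by rewrite (brDl Hbr) !(brDr Hbr) eDD' /wedge2 !addrA.
Qed.

Section Frame.
Variables (fr : seq (E * E)) (h : A).
Hypotheses (frame1 : forall y, y = \sum_(k <- fr) ip k.2 y *: k.1).
Hypotheses (frame2 : forall w, w = \sum_(k <- fr) ip k.1 w *: k.2).
Hypothesis half : h + h = 1.

Lemma wedge2_frame_expansion s :
  wedge2 s *+ 2 = \sum_(k <- fr) br (wedge2 s) (iE k.1) * iE k.2.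
Proof.
have frame2' x : \sum_(k <- fr) ip x k.1 *: k.2 = x.
  by rewrite {2}(frame2 x); apply: eq_bigr => k _; rewrite ipC.
have iE_sumZ c x : \sum_(k <- fr) iE (c k *: x) * iE k.2
                   = iE x * iE (\sum_(k <- fr) c k *: k.2).
  rewrite (add_morph_sum (iED Hgm)) mulr_sumr; apply: eq_bigr => k _.
  by rewrite !(iEZ Hgm) (iA_comm _ (hom_iE Hgm x)) mulrA.
under eq_bigr do rewrite br_wedge2_iE /contraction (add_morph_sum (iED Hgm)) mulr_suml.
rewrite exchange_big /= -sumrMnl; apply: eq_bigr => q _.
under eq_bigr do rewrite (add_morphB (iED Hgm)) mulrBl.
by rewrite sumrB !iE_sumZ !frame2' [iE q.2 * _]iEE_anticomm opprK mulr2n.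
Qed.

Lemma wedge2_eq0 W : is_wedge2 W -> (forall y, br W (iE y) = 0) -> W = 0.
Proof.
move=> [s ->] H; have := wedge2_frame_expansion s.
under eq_bigr do rewrite H mul0r.
rewrite big1_eq => e.
by rewrite -[wedge2 s]mul1r -(iA1 Hgm) -half (iAD Hgm) mulrDl -mulrDr -mulr2n e mulr0.
Qed.

(* With [(e_k, e'_k)] the dual frame, [1/2 sum_k L e_k /\ e'_k] acts on [E]
   by [L] when [L] is skew-adjoint. *)
Definition skew_wedge2 (L : E -> E) : T := wedge2 [seq (h *: L k.1, k.2) | k <- fr].

Lemma br_skew_wedge2 (L : E -> E) :
  (forall a x y, L (a *: x + y) = a *: L x + L y) ->
  (forall x y, ip (L x) y = - ip x (L y)) ->
  forall y, br (skew_wedge2 L) (iE y) = iE (L y).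
Proof.
move=> Llin Lskew y.
have LD : {morph L : x x' / x + x'} by move=> x x'; rewrite -[x]scale1r Llin !scale1r.
have LZ a x : L (a *: x) = a *: L x by rewrite -[a *: x]addr0 Llin (add_morph0 LD) addr0.
rewrite br_wedge2_iE /contraction big_map sumrB.
have -> : \sum_(k <- fr) ip k.2 y *: (h *: L k.1) = h *: L y.
  rewrite {2}(frame1 y) (add_morph_sum LD) scaler_sumr; apply: eq_bigr => k _.
  by rewrite LZ !scalerA mulrC.
have -> : \sum_(k <- fr) ip (h *: L k.1) y *: k.2 = - (h *: L y).
  rewrite {1}(frame2 (L y)) scaler_sumr -sumrN; apply: eq_bigr => k _.
  by rewrite ipZl // Lskew scalerA mulrN scaleNr.
by rewrite opprK -scalerDl half scale1r.
Qed.

Lemma skew_wedge2D L L1 L2 : (forall y, L y = L1 y + L2 y) ->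
  skew_wedge2 L = skew_wedge2 L1 + skew_wedge2 L2.
Proof.
move=> eL; rewrite /skew_wedge2 /wedge2 !big_map -big_split; apply: eq_bigr => k _.
by rewrite eL scalerDr (iED Hgm) mulrDl.
Qed.

Lemma skew_wedge2Z L L1 a : (forall y, L y = a *: L1 y) ->
  skew_wedge2 L = iA a * skew_wedge2 L1.
Proof.
move=> eL; rewrite /skew_wedge2 /wedge2 !big_map mulr_sumr; apply: eq_bigr => k _.
by rewrite eL scalerA mulrC -scalerA (iEZ Hgm) mulrA.
Qed.

End Frame.

End Wedge2.

Section MetricConnection.
Variables (R : comNzRingType) (A : comAlgType R) (E : lmodType A).
Variables (ip : E -> E -> A) (nabla : (A -> A) -> E -> E).
Hypothesis Hc : metric_connection ip nabla.

Lemma nabla_der_add D D' x : isDer D -> isDer D' ->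
  nabla (der_add D D') x = nabla D x + nabla D' x.
Proof. by case: Hc => H _; apply: H. Qed.

Lemma nabla_der_scale a D x : isDer D -> nabla (der_scale a D) x = a *: nabla D x.
Proof. by case: Hc => _ [H _]; apply: H. Qed.

Lemma nablaD D : isDer D -> {morph nabla D : x y / x + y}.
Proof. by case: Hc => _ [_ [H _]] HD x y; apply: H. Qed.

Lemma nablaZ D a x : isDer D -> nabla D (a *: x) = a *: nabla D x + D a *: x.
Proof. by case: Hc => _ [_ [_ [H _]]]; apply: H. Qed.

Lemma nabla_metric D x y : isDer D -> D (ip x y) = ip (nabla D x) y + ip x (nabla D y).
Proof. by case: Hc => _ [_ [_ [_ H]]]; apply: H. Qed.

End MetricConnection.

Section Transport.
Variables (R : comNzRingType) (A B : comAlgType R) (E : lmodType A) (F : lmodType B).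
Variables (ipE : E -> E -> A) (ipF : F -> F -> B).
Variables (nablaE : (A -> A) -> E -> E) (nablaF : (B -> B) -> F -> F).
Hypothesis HipF : good_inner_product ipF.
Hypotheses (HcE : metric_connection ipE nablaE) (HcF : metric_connection ipF nablaF).
Variables (g : A -> B) (gi : B -> A) (G : E -> F) (Gi : F -> E).
Hypotheses (gD : {morph g : a b / a + b}) (gM : {morph g : a b / a * b}).
Hypotheses (gZ : forall (r : R) a, g (r *: a) = r *: g a).
Hypotheses (gK : cancel g gi) (giK : cancel gi g).
Hypotheses (GD : {morph G : x y / x + y}) (GZ : forall a x, G (a *: x) = g a *: G x).
Hypotheses (GK : cancel G Gi) (GiK : cancel Gi G).
Hypothesis Giso : forall x y, g (ipE x y) = ipF (G x) (G y).

Definition der_push (D : A -> A) : B -> B := fun b => g (D (gi b)).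

Lemma der_pushP D : isDer D -> isDer (der_push D).
Proof.
have giD : {morph gi : a b / a + b} by move=> a b; apply: (can_inj gK); rewrite gD !giK.
move=> HD; split=> [r a b|a b]; rewrite /der_push.
  have giZ : gi (r *: a) = r *: gi a by apply: (can_inj gK); rewrite gZ !giK.
  by rewrite giD giZ (derD HD) (derZ HD) gD gZ.
have -> : gi (a * b) = gi a * gi b by apply: (can_inj gK); rewrite gM !giK.
by rewrite (derM HD) gD !gM !giK.
Qed.

Lemma der_push_add D D' : der_push (der_add D D') = der_add (der_push D) (der_push D').
Proof. by apply: funext => b; rewrite /der_push /der_add gD. Qed.

Lemma der_push_scale a D : der_push (der_scale a D) = der_scale (g a) (der_push D).
Proof. by apply: funext => b; rewrite /der_push /der_scale gM. Qed.

Lemma der_push_lie D D' : der_push (der_lie D D') = der_lie (der_push D) (der_push D').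
Proof. by apply: funext => b; rewrite /der_push /der_lie (add_morphB gD) !gK. Qed.

(* A difference of two metric connections, hence [B]-linear and skew-adjoint. *)
Definition nabla_defect (D : A -> A) (y : F) : F :=
  nablaF (der_push D) y - G (nablaE D (Gi y)).

Lemma GiD : {morph Gi : x y / x + y}.
Proof. by move=> x y; apply: (can_inj GK); rewrite GD !GiK. Qed.

Lemma GiZ b y : Gi (b *: y) = gi b *: Gi y.
Proof. by apply: (can_inj GK); rewrite GZ !GiK giK. Qed.

Lemma nabla_defect_linear D : isDer D ->
  forall b x y, nabla_defect D (b *: x + y) = b *: nabla_defect D x + nabla_defect D y.
Proof.
move=> HD b x y; have HpD := der_pushP HD.
rewrite /nabla_defect (nablaD HcF HpD) (nablaZ HcF _ _ HpD) GiD GiZ.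
rewrite (nablaD HcE HD) (nablaZ HcE _ _ HD) !GD !GZ GiK giK /der_push scalerBr.
set p := b *: _; set q := _ *: x; set u := b *: _.
rewrite !opprD !addrA; congr (_ - _).
by rewrite (addrAC _ (- u)) (addrAC (p + q)) addrK addrAC.
Qed.

Lemma nabla_defect_skew D : isDer D ->
  forall x y, ipF (nabla_defect D x) y = - ipF x (nabla_defect D y).
Proof.
move=> HD x y; have giiso : gi (ipF x y) = ipE (Gi x) (Gi y).
  by apply: (can_inj gK); rewrite giK Giso !GiK.
have := nabla_metric HcF x y (der_pushP HD).
rewrite {1}/der_push giiso (nabla_metric HcE _ _ HD) gD !Giso !GiK => e.
rewrite /nabla_defect (add_morphB (ipDl HipF _)) (add_morphB (ipDr HipF _)).
have -> : ipF (nablaF (der_push D) x) y =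
  ipF (G (nablaE D (Gi x))) y + ipF x (G (nablaE D (Gi y))) - ipF x (nablaF (der_push D) y).
  by rewrite e addrK.
ring.
Qed.

Lemma nabla_defect_add D D' : isDer D -> isDer D' ->
  forall y, nabla_defect (der_add D D') y = nabla_defect D y + nabla_defect D' y.
Proof.
move=> HD HD' y; rewrite /nabla_defect der_push_add.
rewrite (nabla_der_add HcF _ (der_pushP HD) (der_pushP HD')) (nabla_der_add HcE _ HD HD').
by rewrite GD opprD addrACA.
Qed.

Lemma nabla_defect_scale a D : isDer D ->
  forall y, nabla_defect (der_scale a D) y = g a *: nabla_defect D y.
Proof.
move=> HD y; rewrite /nabla_defect der_push_scale.
by rewrite (nabla_der_scale HcF _ _ (der_pushP HD)) (nabla_der_scale HcE _ _ HD) GZ scalerBr.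
Qed.

End Transport.

Section Lift.
Variables (R : comNzRingType) (A B : comAlgType R) (E : lmodType A) (F : lmodType B).
Variables (ipE : E -> E -> A) (ipF : F -> F -> B).
Variables (nablaE : (A -> A) -> E -> E) (nablaF : (B -> B) -> F -> F).
Variables (TE TF : nzRingType) (homE : nat -> TE -> Prop) (homF : nat -> TF -> Prop).
Variables (iAE : A -> TE) (iEE : E -> TE) (iDE : (A -> A) -> TE) (brE : TE -> TE -> TE).
Variables (iAF : B -> TF) (iEF : F -> TF) (iDF : (B -> B) -> TF) (brF : TF -> TF -> TF).
Hypothesis HipF : good_inner_product ipF.
Hypotheses (HcE : metric_connection ipE nablaE) (HcF : metric_connection ipF nablaF).
Hypothesis HRE : is_rothstein_algebra ipE nablaE homE iAE iEE iDE brE.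
Hypothesis HRF : is_rothstein_algebra ipF nablaF homF iAF iEF iDF brF.
Variables (g : A -> B) (gi : B -> A) (G : E -> F) (Gi : F -> E).
Hypotheses (gD : {morph g : a b / a + b}) (gM : {morph g : a b / a * b}).
Hypotheses (g1 : g 1 = 1) (gZ : forall (r : R) a, g (r *: a) = r *: g a).
Hypotheses (gK : cancel g gi) (giK : cancel gi g).
Hypotheses (GD : {morph G : x y / x + y}) (GZ : forall a x, G (a *: x) = g a *: G x).
Hypotheses (GK : cancel G Gi) (GiK : cancel Gi G).
Hypothesis Giso : forall x y, g (ipE x y) = ipF (G x) (G y).
Variables (fr : seq (F * F)) (h : B).
Hypotheses (frame1 : forall y, y = \sum_(k <- fr) ipF k.2 y *: k.1).
Hypotheses (frame2 : forall w, w = \sum_(k <- fr) ipF k.1 w *: k.2).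
Hypothesis half : h + h = 1.

Let HgcE := rothstein_graded HRE.
Let HgmE := rothstein_generators HRE.
Let HbrE := rothstein_bracket HRE.
Let HgcF := rothstein_graded HRF.
Let HgmF := rothstein_generators HRF.
Let HbrF := rothstein_bracket HRF.

Local Notation pushD := (der_push g gi).
Let HpD := der_pushP gD gM gZ gK giK.
Local Notation defect := (nabla_defect nablaE nablaF g gi G Gi).

Definition defect_wedge2 (D : A -> A) : TF := skew_wedge2 iEF fr h (defect D).

Definition lift_iD (D : A -> A) : TF := iDF (pushD D) + defect_wedge2 D.

Lemma br_defect_wedge2 D y : isDer D -> brF (defect_wedge2 D) (iEF y) = iEF (defect D y).
Proof.
move=> HD; apply: (br_skew_wedge2 HRF HipF frame1 frame2 half).
- exact: (nabla_defect_linear HcE HcF gD gM gZ gK giK GD GZ GK GiK).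
- exact: (nabla_defect_skew HipF HcE HcF gD gM gZ gK giK GiK Giso).
Qed.

Lemma is_wedge2_defect D : is_wedge2 iEF (defect_wedge2 D).
Proof. by eexists. Qed.

Lemma lift_generator_maps : generator_maps homF (iAF \o g) (iEF \o G) lift_iD.
Proof.
rewrite /lift_iD; do ![split] => /=.
- by move=> a b; rewrite gD (iAD HgmF).
- by move=> a b; rewrite gM (iAM HgmF).
- by rewrite g1 (iA1 HgmF).
- by move=> a; apply: (hom_iA HgmF).
- by move=> x y; rewrite GD (iED HgmF).
- by move=> a x; rewrite GZ (iEZ HgmF).
- by move=> x; apply: (hom_iE HgmF).
- move=> D D' HD HD'; rewrite (der_push_add gi gD) (iDD HgmF (HpD HD) (HpD HD')) addrACA.
  congr (_ + _); apply: (skew_wedge2D HRF) => y.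
  exact: (nabla_defect_add HcE HcF Gi gD gM gZ gK giK GD HD HD').
- move=> a D HD; rewrite (der_push_scale gi gM) (iDZ HgmF _ (HpD HD)) mulrDr.
  congr (_ + _); apply: (skew_wedge2Z HRF) => y.
  exact: (nabla_defect_scale HcE HcF Gi gD gM gZ gK giK GZ a HD).
- move=> D HD; apply: (homD HgcF); first exact: (hom_iD HgmF (HpD HD)).
  exact: (hom_wedge2 HRF).
Qed.

Lemma br_lift_iD_iA D a : isDer D -> brF (lift_iD D) (iAF (g a)) = - iAF (g (D a)).
Proof.
move=> HD; rewrite /lift_iD (brDl HbrF) (br_iDA HRF _ (HpD HD)).
by rewrite /defect_wedge2 /skew_wedge2 (br_wedge2_iA HRF) addr0 /der_push gK.
Qed.

Lemma br_lift_iD_iE D x : isDer D -> brF (lift_iD D) (iEF (G x)) = - iEF (G (nablaE D x)).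
Proof.
move=> HD; rewrite /lift_iD (brDl HbrF) (br_iDE HRF _ (HpD HD)).
rewrite br_defect_wedge2 // /nabla_defect GK (add_morphB (iED HgmF)).
by rewrite addKr.
Qed.

Section LiftMorphism.
Variable phi : TE -> TF.
Hypothesis phiR : ring_morph phi.
Hypotheses (phiA : forall a, phi (iAE a) = iAF (g a)) (phiE : forall x, phi (iEE x) = iEF (G x)).
Hypothesis phiD : forall D, isDer D -> phi (iDE D) = lift_iD D.

Let phi_add : {morph phi : x y / x + y}. Proof. by case: phiR. Qed.
Let phiM : {morph phi : x y / x * y}. Proof. by case: phiR => _ []. Qed.
Let phi1 : phi 1 = 1. Proof. by case: phiR => _ []. Qed.

Let span_by (good : nat -> TE -> Prop) :=
  free_graded_span HgcE HgmE (rothstein_free HRE) (good := good).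

Lemma lift_hom r t : homE r t -> homF r (phi t).
Proof.
move=> ht; pose good s u := homE s u /\ homF s (phi u).
have [s [hs et]] : exists s : seq (nat * TE),
    (forall p, p \in s -> good p.1 p.2) /\ t = \sum_(p <- s) p.2.
  apply: span_by.
  - by split; [apply: (hom1 HgcE) | rewrite phi1; apply: (hom1 HgcF)].
  - move=> r' t' [h1 h2]; split; first exact: (homN HgcE).
    by rewrite (add_morphN phi_add); apply: (homN HgcF).
  - move=> r1 r2 t1 t2 [h1 h2] [h3 h4]; split; first exact: (homM HgcE).
    by rewrite phiM; apply: (homM HgcF).
  - by move=> a; rewrite /good phiA; split; [apply: (hom_iA HgmE) | apply: (hom_iA HgmF)].
  - by move=> x; rewrite /good phiE; split; [apply: (hom_iE HgmE) | apply: (hom_iE HgmF)].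
  - move=> D HD; rewrite /good phiD //; split; first exact: (hom_iD HgmE).
    exact: (hom_iD lift_generator_maps).
rewrite (homogeneous_component HgcE (rothstein_direct_sum HRE) ht (fun p ps => (hs p ps).1) et).
rewrite -big_filter (add_morph_sum phi_add); apply: (hom_sum HgcF) => p.
by rewrite mem_filter => /andP [/eqP <- ps] _; exact: (hs p ps).2.
Qed.

Definition br_preserved x y := phi (brE x y) = brF (phi x) (phi y).

Lemma br_preserved_sym r s x y :
  homE r x -> homE s y -> br_preserved x y -> br_preserved y x.
Proof.
rewrite /br_preserved => hx hy e; rewrite (brC HbrE hy hx) (add_morphN phi_add).
by rewrite (ring_morph_sign phiR) e (brC HbrF (lift_hom hy) (lift_hom hx)).
Qed.

(* By the Leibniz rule in the second argument. *)
Lemma br_preserved_generated r x : homE r x ->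
  (forall a, br_preserved x (iAE a)) -> (forall w, br_preserved x (iEE w)) ->
  (forall D, isDer D -> br_preserved x (iDE D)) -> forall z, br_preserved x z.
Proof.
move=> hx qA qE qD z; pose good s y := [/\ homE s y, homF s (phi y) & br_preserved x y].
have [l [hl ->]] : exists l : seq (nat * TE),
    (forall p, p \in l -> good p.1 p.2) /\ z = \sum_(p <- l) p.2.
  apply: span_by.
  - split; [exact: (hom1 HgcE) | exact: lift_hom (hom1 HgcE) |].
    rewrite /br_preserved (brx1 HgcE HbrE hx) (add_morph0 phi_add) phi1.
    by rewrite (brx1 HgcF HbrF (lift_hom hx)).
  - move=> s y [hy hy' e]; split; [exact: (homN HgcE) | |].
      by rewrite (add_morphN phi_add); apply: (homN HgcF).
    move: e; rewrite /br_preserved (add_morphN (brDr HbrE _)) !(add_morphN phi_add) => ->.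
    by rewrite (add_morphN (brDr HbrF _)).
  - move=> s1 s2 y1 y2 [h1 h1' e1] [h2 h2' e2]; split; [exact: (homM HgcE) | |].
      by rewrite phiM; apply: (homM HgcF).
    move: e1 e2; rewrite /br_preserved (brL HbrE _ hx h1) phi_add (ring_morph_sign phiR).
    by rewrite !phiM (brL HbrF _ (lift_hom hx) h1') => -> ->.
  - by move=> a; split; [exact: (hom_iA HgmE) | exact: lift_hom (hom_iA HgmE a) |].
  - by move=> w; split; [exact: (hom_iE HgmE) | exact: lift_hom (hom_iE HgmE w) |].
  - move=> D HD; split; [exact: (hom_iD HgmE) | exact: lift_hom (hom_iD HgmE HD) |].
    exact: qD.
rewrite /br_preserved (add_morph_sum (brDr HbrE _)) !(add_morph_sum phi_add).
rewrite (add_morph_sum (brDr HbrF _)); apply: eq_big_seq => p ps.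
by case: (hl p ps).
Qed.

Lemma br_preserved_iA_iA a b : br_preserved (iAE a) (iAE b).
Proof. by rewrite /br_preserved (br_iAA HRE) (add_morph0 phi_add) !phiA (br_iAA HRF). Qed.

Lemma br_preserved_iA_iE a x : br_preserved (iAE a) (iEE x).
Proof. by rewrite /br_preserved (br_iAE HRE) (add_morph0 phi_add) phiA phiE (br_iAE HRF). Qed.

Lemma br_preserved_iE_iE x y : br_preserved (iEE x) (iEE y).
Proof. by rewrite /br_preserved (br_iEE HRE) phiA !phiE (br_iEE HRF) Giso. Qed.

Lemma br_preserved_iD_iA D a : isDer D -> br_preserved (iDE D) (iAE a).
Proof.
move=> HD; rewrite /br_preserved (br_iDA HRE _ HD) (add_morphN phi_add) !phiA phiD //.
by rewrite br_lift_iD_iA.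
Qed.

Lemma br_preserved_iD_iE D x : isDer D -> br_preserved (iDE D) (iEE x).
Proof.
move=> HD; rewrite /br_preserved (br_iDE HRE _ HD) (add_morphN phi_add) !phiE phiD //.
by rewrite br_lift_iD_iE.
Qed.

Lemma br_preserved_iA a z : br_preserved (iAE a) z.
Proof.
apply: (br_preserved_generated (hom_iA HgmE a)) => [b|x|D HD].
- exact: br_preserved_iA_iA.
- exact: br_preserved_iA_iE.
- exact: br_preserved_sym (hom_iD HgmE HD) (hom_iA HgmE a) (br_preserved_iD_iA _ HD).
Qed.

Lemma br_preserved_iE x z : br_preserved (iEE x) z.
Proof.
apply: (br_preserved_generated (hom_iE HgmE x)) => [a|y|D HD].
- exact: br_preserved_sym (hom_iA HgmE a) (hom_iE HgmE x) (br_preserved_iA_iE a x).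
- exact: br_preserved_iE_iE.
- exact: br_preserved_sym (hom_iD HgmE HD) (hom_iE HgmE x) (br_preserved_iD_iE _ HD).
Qed.

Section TwoDerivations.
Variables (D1 D2 : A -> A).
Hypotheses (HD1 : isDer D1) (HD2 : isDer D2).

Let br_defect := phi (brE (iDE D1) (iDE D2)) - brF (lift_iD D1) (lift_iD D2).

(* Both brackets lift [der_lie D1 D2] modulo [Lambda^2 F]. *)
Lemma is_wedge2_br_defect : is_wedge2 iEF br_defect.
Proof.
rewrite /br_defect; have [s ->] := br_iDD HRE HD1 HD2.
have [V [hV ->]] := br_iD_wedge2 HRF HipF (HpD HD1) (HpD HD2)
  (is_wedge2_defect D1) (is_wedge2_defect D2).
rewrite (add_morphB phi_add) (add_morphN phi_add) (phiD (der_lieP HD1 HD2)).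
rewrite /lift_iD (der_push_lie gD gK) (add_morph_sum phi_add).
rewrite !opprD opprK addrA (addrAC _ (- \sum_(q <- s) _)) (addrAC (- iDF _)) addNr add0r.
apply: is_wedge2D; last exact: (is_wedge2N HRF hV).
apply: is_wedge2D; first exact: (is_wedge2N HRF (is_wedge2_defect _)).
apply: (is_wedge2N HRF); exists [seq (G q.1, G q.2) | q <- s].
by rewrite /wedge2 big_map; apply: eq_bigr => q _; rewrite phiM !phiE.
Qed.

(* Both brackets act on [F] by the commutator of the two actions (Jacobi). *)
Lemma br_br_defect_iE y : brF br_defect (iEF y) = 0.
Proof.
have hW := hom_br HbrE (hom_iD HgmE HD1) (hom_iD HgmE HD2).
rewrite /br_defect (add_morphB (brDl HbrF _)) -(GiK y) -phiE.
rewrite -(br_preserved_sym (hom_iE HgmE _) hW (br_preserved_iE _ _)).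
rewrite (brJ_even HbrE _ (hom_iD HgmE HD1) (hom_iD HgmE HD2)) !(br_iDE HRE) //.
rewrite !(add_morphN (brDr HbrE _)) !(br_iDE HRE) // !opprK (add_morphB phi_add) !phiE.
rewrite (brJ_even HbrF _ (hom_iD lift_generator_maps HD1) (hom_iD lift_generator_maps HD2)).
rewrite !br_lift_iD_iE // !(add_morphN (brDr HbrF _)) !br_lift_iD_iE //.
by rewrite !opprK subrr.
Qed.

Lemma br_preserved_iD_iD : br_preserved (iDE D1) (iDE D2).
Proof.
apply/eqP; rewrite -subr_eq0 /br_preserved !phiD //; apply/eqP.
exact: (wedge2_eq0 HRF HipF frame2 half is_wedge2_br_defect br_br_defect_iE).
Qed.

End TwoDerivations.

Lemma br_preserved_iD D z : isDer D -> br_preserved (iDE D) z.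
Proof.
move=> HD; apply: (br_preserved_generated (hom_iD HgmE HD)) => [a|x|D' HD'].
- exact: br_preserved_iD_iA.
- exact: br_preserved_iD_iE.
- exact: br_preserved_iD_iD.
Qed.

Lemma br_preserved_hom r x y : homE r x -> br_preserved x y.
Proof.
move=> hx; apply: (br_preserved_generated hx) => [a|w|D HD].
- exact: br_preserved_sym (hom_iA HgmE a) hx (br_preserved_iA a x).
- exact: br_preserved_sym (hom_iE HgmE w) hx (br_preserved_iE w x).
- exact: br_preserved_sym (hom_iD HgmE HD) hx (br_preserved_iD x HD).
Qed.

Lemma lift_poisson_morphism : poisson_morphism homE homF brE brF phi.
Proof.
do ![split] => //; first exact: lift_hom.
move=> x y; have [l [hl ->]] : exists l : seq (nat * TE),
    (forall p, p \in l -> homE p.1 p.2) /\ x = \sum_(p <- l) p.2.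
  apply: span_by; [exact: (hom1 HgcE) | exact: (homN HgcE) | exact: (homM HgcE) |
                   exact: (hom_iA HgmE) | exact: (hom_iE HgmE) | exact: (hom_iD HgmE)].
rewrite (add_morph_sum (brDl HbrE _)) !(add_morph_sum phi_add) (add_morph_sum (brDl HbrF _)).
by apply: eq_big_seq => p /hl; apply: br_preserved_hom.
Qed.

End LiftMorphism.

Lemma rothstein_lift : exists Gs : TE -> TF,
  poisson_morphism homE homF brE brF Gs /\
  (forall a, Gs (iAE a) = iAF (g a)) /\ (forall x, Gs (iEE x) = iEF (G x)).
Proof.
have [phi [phiR [phiA [phiE [phiD _]]]]] := rothstein_free HRE HgcF lift_generator_maps.
by exists phi; split; first exact: lift_poisson_morphism.
Qed.

End Lift.

Theorem mainTheorem15
  (R : comNzRingType)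
  (hQ : forall n : nat, exists u : R, u * (n.+1)%:R = 1)
  (A B : comAlgType R) (E : lmodType A) (F : lmodType B)
  (ipE : E -> E -> A) (ipF : F -> F -> B)
  (nablaE : (A -> A) -> E -> E) (nablaF : (B -> B) -> F -> F)
  (TE TF : nzRingType)
  (homE : nat -> TE -> Prop) (homF : nat -> TF -> Prop)
  (iAE : A -> TE) (iEE : E -> TE) (iDE : (A -> A) -> TE) (brE : TE -> TE -> TE)
  (iAF : B -> TF) (iEF : F -> TF) (iDF : (B -> B) -> TF) (brF : TF -> TF -> TF)
  (g : A -> B) (G : E -> F) :
  fg_projective E -> fg_projective F ->
  good_inner_product ipE -> good_inner_product ipF ->
  metric_connection ipE nablaE -> metric_connection ipF nablaF ->
  is_rothstein_algebra ipE nablaE homE iAE iEE iDE brE ->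
  is_rothstein_algebra ipF nablaF homF iAF iEF iDF brF ->
  (forall a b, g (a + b) = g a + g b) ->
  (forall a b, g (a * b) = g a * g b) ->
  g 1 = 1 ->
  (forall (r : R) a, g (r *: a) = r *: g a) ->
  bijective g ->
  (forall x y, G (x + y) = G x + G y) ->
  (forall (r : R) x, G (r%:A *: x) = r%:A *: G x) ->
  (forall (a : A) x, G (a *: x) = g a *: G x) ->
  bijective G ->
  (forall x y, g (ipE x y) = ipF (G x) (G y)) ->
  exists Gs : TE -> TF,
    poisson_morphism homE homF brE brF Gs /\
    (forall a, Gs (iAE a) = iAF (g a)) /\
    (forall x, Gs (iEE x) = iEF (G x)).
Proof.
move=> _ HfF _ HipF HcE HcF HRE HRF gD gM g1 gZ [gi gK giK] GD _ GZ [Gi GK GiK] Giso.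
have [u u2] := hQ 1%N.
have half : u%:A + u%:A = 1 :> B by rewrite -scalerDl -mulr2n -mulr_natr u2 scale1r.
have [fr [frame1 frame2]] := dual_frame HipF HfF.
exact: (rothstein_lift HipF HcE HcF HRE HRF gD gM g1 gZ gK giK GD GZ GK GiK Giso
          frame1 frame2 half).
Qed.
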